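(* Let $t$ be a record with versions $t'_1,\dots,t'_I$ and let $G'$ be its feasible sub-SUG, with layers $V'_1,\dots,V'_I$. This holds regardless of how the releases were generalized. For every $1\le i\le I$, the disclosure risk of $t'_i$ equals $1$ if and only if $|V'_i|=1$.
   Context: Data model. A microdata table is published repeatedly. Its records carry an identifier, quasi-identifier (QI) attributes and a sensitive attribute $S$ with a finite domain $\mathrm{dom}(S)$. Each published (generalized) table partitions its records, possibly including counterfeit records, into QI-groups. If a record $t$ appears in a release, its candidate sensitive set in that release is the set of sensitive values occurring in its QI-group; this set contains $t$'s actual sensitive value. The versions of $t$ are its records in the successive releases in which it appears, listed in order: $t'_1,\dots,t'_I$, with candidate sensitive sets $C_1,\dots,C_I$. Internal updates are governed by a publicly known transition probability $P_{trans}(a,b)\ge 0$ for $a,b\in\mathrm{dom}(S)$. Actual updates are feasible: $P_{trans}(t'_i[S],t'_{i+1}[S])>0$ for every $i$. Sensitive attribute update graph (SUG). The SUG of $t$ has, for each $i=1,\dots,I$, a layer $V_i=\{v_{i,s}: s\in C_i\}$ with one node per value of $C_i$. Each node has a weight $w(v_{i,s})>0$, its linking probability, and the weights in each layer sum to $1$; under the random-world assumption $w(v_{i,s})=1/|C_i|$. There is a directed edge $(v_{i,s},v_{i+1,s'})$ exactly when $P_{trans}(s,s')>0$, and its weight is $P_{trans}(s,s')$. Feasible sub-SUG. Obtain it from the SUG by repeatedly deleting a node, together with its incident edges, until no node can be deleted. A node is deleted if any of the following holds: it lies in $V_1$ and has no outgoing edge; it lies in $V_I$ and has no incoming edge; it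 lies in $V_i$ with $1<i<I$ and lacks an incoming edge or lacks an outgoing edge. When $I=1$, no node is deleted. Denote the remaining layers by $V'_i$. Disclosure risk. A feasible path is a path $p=(v'_{1,x_1},\dots,v'_{I,x_I})$ through the feasible sub-SUG with one node in each layer, where consecutive nodes are joined by edges. Its weight is $w(p)=w(v'_{I,x_I})\prod_{i=1}^{I-1} w(v'_{i,x_i})\,w(v'_{i,x_i},v'_{i+1,x_{i+1}})$. The disclosure risk of version $t'_i$ is the total weight of the feasible paths passing through the node of $V'_i$ that represents $t'_i[S]$, divided by the total weight of all feasible paths. *)

(* Sensitive attribute update graph (SUG), feasible sub-SUG,
   feasible paths and disclosure risk.  The record has I = n.+1 versions,
   indexed by 'I_n.+1 (version i+1 of the paper is index i here). *)
From mathcomp Require Import all_boot all_order all_algebra.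
Set Implicit Arguments. Unset Strict Implicit. Unset Printing Implicit Defensive.
Import Order.TTheory GRing.Theory Num.Theory.
Local Open Scope ring_scope.

Section SUG.
Variables (R : realFieldType) (S : finType) (n : nat).
Variable C : 'I_n.+1 -> {set S}.
Variable Ptrans : S -> S -> R.
(* node weights (linking probabilities): w i s = w(v_{i,s}) *)
Variable w : 'I_n.+1 -> S -> R.

Definition node := ('I_n.+1 * S)%type.

Definition SUG_nodes : {set node} := [set v : node | v.2 \in C v.1].

Definition sug_edge (u v : node) : bool :=
  (u.1.+1 == v.1 :> nat) && (0 < Ptrans u.2 v.2).

Definition has_out (X : {set node}) (v : node) : bool :=
  [exists u in X, sug_edge v u].
Definition has_in (X : {set node}) (v : node) : bool :=
  [exists u in X, sug_edge u v].

(* deletion rule, relative to the current remaining node set X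
   (layer V_1 is index 0, layer V_I is index n); when I = 1 nothing is deleted *)
Definition deletable (X : {set node}) (v : node) : bool :=
  [|| (v.1 == 0 :> nat) && (0 < n)%N && ~~ has_out X v,
      (v.1 == n :> nat) && (0 < n)%N && ~~ has_in X v
    | (0 < v.1 < n)%N && (~~ has_in X v || ~~ has_out X v)].

Definition delete_step (X : {set node}) : {set node} :=
  [set v in X | ~~ deletable X v].

(* repeat deletion until no node can be deleted; #|node| rounds suffice,
   since each round that is not a fixpoint removes at least one node *)
Definition feasible_nodes : {set node} :=
  iter #|{: node}| delete_step SUG_nodes.

Definition feasible_layer (i : 'I_n.+1) : {set S} :=
  [set s | (i, s) \in feasible_nodes].

Definition feasible_path (x : {ffun 'I_n.+1 -> S}) : bool :=
  [forall i, (i, x i) \in feasible_nodes] &&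
  [forall i : 'I_n, 0 < Ptrans (x (widen_ord (leqnSn n) i)) (x (lift ord0 i))].

Definition path_weight (x : {ffun 'I_n.+1 -> S}) : R :=
  w ord_max (x ord_max) *
  \prod_(i < n) (w (widen_ord (leqnSn n) i) (x (widen_ord (leqnSn n) i))
                 * Ptrans (x (widen_ord (leqnSn n) i)) (x (lift ord0 i))).

Definition disclosure_risk (i : 'I_n.+1) (a : S) : R :=
  (\sum_(x | feasible_path x && (x i == a)) path_weight x) /
  (\sum_(x | feasible_path x) path_weight x).

End SUG.

From mathcomp Require Import all_boot all_order all_algebra.
From mathcomp Require Import zify.
Set Implicit Arguments. Unset Strict Implicit. Unset Printing Implicit Defensive.
Import Order.TTheory GRing.Theory Num.Theory.

(* Deleting nodes never creates edges, so the deletion rounds stabilise in a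
   set where every node has a successor in the next layer (unless it is in
   the last one) and a predecessor in the previous layer (unless it is in the
   first one).  Walking forwards and backwards from any node of the feasible
   sub-SUG thus yields a feasible path through it.  The actual versions of
   the record form a path of the SUG which is closed under the deletion rule,
   so it survives every round and is feasible.  As feasible paths have
   positive weight, the risk of version i is 1 exactly when every feasible
   path passes through its actual value; by the two facts above this means
   that this value is the only node of the layer V'_i. *)

Section LayeredPath.
Variables (S : Type) (n : nat).

Lemma forward_path (P : nat -> S -> Prop) (E : S -> S -> Prop) :
  (forall k t, k < n -> P k t -> exists2 u, P k.+1 u & E t u) ->
  forall i s, i <= n -> P i s ->
  exists x : nat -> S, [/\ x i = s, forall j, i <= j <= n -> P j (x j)
                         & forall j, i <= j < n -> E (x j) (x j.+1)].
Proof.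
move=> has_succ i s le_in Pis.
have ext m : i + m <= n -> exists x : nat -> S, [/\ x i = s,
    forall j, i <= j <= i + m -> P j (x j)
  & forall j, i <= j < i + m -> E (x j) (x j.+1)].
  elim: m => [|m IHm] le_mn.
    exists (fun=> s); split=> // j; rewrite addn0; last lia.
    by move=> le_j; have -> : j = i by lia.
  have [x [xi xP xE]] := IHm ltac:(lia).
  have [u Pu Etu] := has_succ (i + m) (x (i + m)) ltac:(lia) (xP (i + m) ltac:(lia)).
  exists (fun j => if j == (i + m).+1 then u else x j); split.
  - by rewrite ifN //; lia.
  - by move=> j le_j; case: eqP => [-> // | ne]; apply: xP; lia.
  - move=> j le_j; rewrite ifN; last lia.
    by rewrite eqSS; case: eqP => [-> | ne]; [| apply: xE; lia].
by have := ext (n - i); rewrite subnKC //; apply.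
Qed.

Lemma backward_path (P : nat -> S -> Prop) (E : S -> S -> Prop) :
  (forall k t, 0 < k <= n -> P k t -> exists2 u, P k.-1 u & E u t) ->
  forall i s, i <= n -> P i s ->
  exists x : nat -> S, [/\ x i = s, forall j, j <= i -> P j (x j)
                         & forall j, j < i -> E (x j) (x j.+1)].
Proof.
move=> has_pred i s le_in Pis.
pose P' k t := P (n - k) t; pose E' t u := E u t.
have has_succ' k t : k < n -> P' k t -> exists2 u, P' k.+1 u & E' t u.
  move=> lt_kn P'kt; have [|u Pu Eut] := has_pred (n - k) t _ P'kt; first lia.
  by exists u; rewrite // /P' subnS.
have [|x [xi xP xE]] := forward_path has_succ' (leq_subr i n) (s := s).
  by rewrite /P' subKn.
exists (fun j => x (n - j)); split.
- exact: xi.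
- move=> j le_ji; have := xP (n - j) ltac:(lia).
  by rewrite /P' subKn //; apply: leq_trans le_in.
- move=> j lt_ji; have := xE (n - j.+1) ltac:(lia).
  by rewrite /E' -subSn ?subSS //; apply: leq_trans le_in.
Qed.

Lemma layered_path (P : nat -> S -> Prop) (E : S -> S -> Prop) :
  (forall k t, k < n -> P k t -> exists2 u, P k.+1 u & E t u) ->
  (forall k t, 0 < k <= n -> P k t -> exists2 u, P k.-1 u & E u t) ->
  forall i s, i <= n -> P i s ->
  exists x : nat -> S, [/\ x i = s, forall j, j <= n -> P j (x j)
                         & forall j, j < n -> E (x j) (x j.+1)].
Proof.
move=> has_succ has_pred i s le_in Pis.
have [y [yi yP yE]] := backward_path has_pred le_in Pis.
have [z [zi zP zE]] := forward_path has_succ le_in Pis.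
exists (fun j => if j <= i then y j else z j); split.
- by rewrite leqnn.
- move=> j le_jn; case: leqP => [le_ji | /ltnW le_ij]; first exact: yP.
  by apply: zP; rewrite le_ij.
- move=> j lt_jn; case: (ltngtP j i) => [lt_ji | lt_ij | eq_ji].
  + exact: yE.
  + by apply: zE; rewrite ltnW.
  + by rewrite eq_ji yi -zi; apply: zE; rewrite leqnn -eq_ji.
Qed.

End LayeredPath.

Section ShrinkingIteration.
Variables (T : finType) (f : {set T} -> {set T}).
Hypothesis f_sub : forall X, f X \subset X.

Lemma iter_shrink_fix X : f (iter #|T| f X) = iter #|T| f X.
Proof.
have fix_or_small k : f (iter k f X) = iter k f X \/ k + #|iter k f X| <= #|T|.
  elim: k => [|k [fixk | small]]; first by right; rewrite max_card.
  - by left; rewrite /= fixk.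
  - have [fixk | nfixk] := eqVneq (f (iter k f X)) (iter k f X); first by left; rewrite /= fixk.
    right; have : f (iter k f X) \proper iter k f X by rewrite properEneq nfixk f_sub.
    by move/proper_card; rewrite iterS; lia.
have [//|small] := fix_or_small #|T|.
have /eqP/cards0_eq -> : #|iter #|T| f X| == 0 by rewrite -leqn0; lia.
by apply/eqP; rewrite eqEsubset f_sub sub0set.
Qed.

End ShrinkingIteration.

Section PartialSumRatio.
Local Open Scope ring_scope.
Variables (R : numFieldType) (I : finType) (P Q : pred I) (f : I -> R).
Hypothesis f_gt0 : forall x, P x -> 0 < f x.

Lemma partial_sum_ratio_eq1 : (exists x, P x) ->
  (\sum_(x | P x && Q x) f x) / (\sum_(x | P x) f x) = 1 <-> (forall x, P x -> Q x).
Proof.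
move=> [x0 Px0]; set N := \sum_(x | P x && Q x) f x.
set M := \sum_(x | P x && ~~ Q x) f x.
have DNM : \sum_(x | P x) f x = N + M by rewrite (bigID Q).
have D_gt0 : 0 < \sum_(x | P x) f x.
  by rewrite (bigD1 x0) //= ltr_pwDl ?f_gt0 // sumr_ge0 // => x /andP[/f_gt0/ltW].
have M0 : M = 0 <-> forall x, P x -> Q x.
  split=> [/psumr_eq0P M0 x Px | allQ].
    apply: contraT => nQx; have := f_gt0 Px.
    by rewrite M0 ?Px ?ltxx // => y /andP[/f_gt0/ltW].
  by rewrite /M big1 // => x /andP[/allQ ->].
rewrite -M0; split=> [/divr1_eq | M_eq0].
  by rewrite DNM -{1}[N]addr0 => /addrI.
have -> : N = \sum_(x | P x) f x by rewrite DNM M_eq0 addr0.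
by rewrite divff // gt_eqF.
Qed.

End PartialSumRatio.

Section FeasibleSubSUG.
Variables (R : realFieldType) (S : finType) (n : nat) (C : 'I_n.+1 -> {set S}).
Variable Ptrans : S -> S -> R.
Local Open Scope ring_scope.
Local Notation node := (node S n).
Local Notation has_out := (@has_out R S n Ptrans).
Local Notation has_in := (@has_in R S n Ptrans).
Local Notation deletable := (@deletable R S n Ptrans).
Local Notation delete_step := (@delete_step R S n Ptrans).
Local Notation F := (feasible_nodes C Ptrans).

Lemma undeletableP (X : {set node}) (v : node) :
  reflect (((v.1 < n)%N -> has_out X v) /\ ((0 < v.1)%N -> has_in X v))
          (~~ deletable X v).
Proof.
have := ltn_ord v.1; rewrite /deletable.
by case: (has_out X v) (has_in X v) => -[] /= ?; apply: (iffP idP); lia.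
Qed.

Lemma delete_step_sub (X : {set node}) : delete_step X \subset X.
Proof. by apply/subsetP => v; rewrite inE => /andP[]. Qed.

Lemma delete_stepS (X Y : {set node}) : X \subset Y -> delete_step X \subset delete_step Y.
Proof.
move=> /subsetP sXY; apply/subsetP => v; rewrite !inE => /andP[/sXY -> /=].
have has_outS u : has_out X u -> has_out Y u.
  by case/existsP=> w /andP[/sXY Yw uw]; apply/existsP; exists w; rewrite Yw.
have has_inS u : has_in X u -> has_in Y u.
  by case/existsP=> w /andP[/sXY Yw wu]; apply/existsP; exists w; rewrite Yw.
move/undeletableP=> [out_v in_v]; apply/undeletableP.
by split=> [/out_v/has_outS | /in_v/has_inS].
Qed.

Lemma feasible_nodes_fix : delete_step F = F.
Proof. exact/iter_shrink_fix/delete_step_sub. Qed.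

Lemma feasible_nodes_sub : F \subset SUG_nodes C.
Proof.
rewrite /feasible_nodes; elim: #|_| => [|k IHk] /=; first exact: subxx.
exact: subset_trans (delete_step_sub _) IHk.
Qed.

Lemma sub_feasible_nodes (Y : {set node}) :
  Y \subset SUG_nodes C -> Y \subset delete_step Y -> Y \subset F.
Proof.
move=> sYC sYY; rewrite /feasible_nodes; elim: #|_| => [|k IHk] //=.
exact: subset_trans sYY (delete_stepS IHk).
Qed.

Lemma feasible_node_undeletable (v : node) : v \in F ->
  ((v.1 < n)%N -> has_out F v) /\ ((0 < v.1)%N -> has_in F v).
Proof. by rewrite -{1}feasible_nodes_fix inE => /andP[_ /undeletableP]. Qed.

Lemma consecutive_edge (x : 'I_n.+1 -> S) (j k : 'I_n.+1) :
  [forall i : 'I_n, 0 < Ptrans (x (widen_ord (leqnSn n) i)) (x (lift ord0 i))] ->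
  j.+1 = k :> nat -> 0 < Ptrans (x j) (x k).
Proof.
move=> /forallP edges jk; have lt_jn : (j < n)%N by rewrite -ltnS jk.
have := edges (Ordinal lt_jn).
have -> : widen_ord (leqnSn n) (Ordinal lt_jn) = j by apply: val_inj.
by have -> : lift ord0 (Ordinal lt_jn) = k by apply: val_inj; rewrite /= -jk.
Qed.

Lemma sug_path_feasible (x : {ffun 'I_n.+1 -> S}) :
  (forall j, x j \in C j) ->
  [forall i : 'I_n, 0 < Ptrans (x (widen_ord (leqnSn n) i)) (x (lift ord0 i))] ->
  feasible_path C Ptrans x.
Proof.
move=> xC edges; rewrite /feasible_path edges andbT.
pose Y := [set v : node | v.2 == x v.1].
suff /subsetP sYF : Y \subset F by apply/forallP => j; apply: sYF; rewrite inE.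
apply: sub_feasible_nodes; apply/subsetP => -[j s]; rewrite !inE => /eqP /= ->.
  exact: xC.
rewrite eqxx /=; apply/undeletableP; split => /= [lt_jn | gt0_j].
  apply/existsP; exists (inord j.+1, x (inord j.+1)).
  rewrite !inE /sug_edge /= inordK ?eqxx //=.
  by apply: consecutive_edge edges _; rewrite inordK.
apply/existsP; exists (inord j.-1, x (inord j.-1)).
have lt_j1 : (j.-1 < n.+1)%N by rewrite prednK // ltnW.
rewrite !inE /sug_edge /= inordK // prednK // !eqxx /=.
by apply: consecutive_edge edges _; rewrite inordK // prednK.
Qed.

Lemma feasible_node_on_path (i : 'I_n.+1) s :
  (i, s) \in F -> exists2 x, feasible_path C Ptrans x & x i = s.
Proof.
move=> Fis; pose P k t : Prop := (inord k, t) \in F.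
have has_succ k t : (k < n)%N -> P k t -> exists2 u, P k.+1 u & 0 < Ptrans t u.
  move=> lt_kn /feasible_node_undeletable[+ _]; have le_kn := ltnW lt_kn.
  rewrite /= inordK // => /(_ lt_kn) /existsP[[j u] /andP[Fju /andP[/eqP /= kj tu]]].
  by rewrite inordK // in kj; exists u; rewrite // /P kj inord_val.
have has_pred k t : (0 < k <= n)%N -> P k t -> exists2 u, P k.-1 u & 0 < Ptrans u t.
  move=> /andP[gt0_k le_kn] /feasible_node_undeletable[_].
  rewrite /= inordK // => /(_ gt0_k) /existsP[[j u] /andP[Fju /andP[/eqP /= jk ut]]].
  by rewrite inordK // in jk; exists u; rewrite // /P -jk inord_val.
have [|y [yi yP yE]] := layered_path has_succ has_pred (ltn_ord i) (s := s).
  by rewrite /P inord_val.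
exists [ffun j : 'I_n.+1 => y j]; last by rewrite ffunE.
apply/andP; split; apply/forallP => j; rewrite !ffunE.
  by have := yP j (ltn_ord j); rewrite /P inord_val.
by rewrite lift0; apply: yE (ltn_ord j).
Qed.

Lemma feasible_path_weight_gt0 (w : 'I_n.+1 -> S -> R) :
  (forall i s, s \in C i -> 0 < w i s) ->
  forall x, feasible_path C Ptrans x -> 0 < path_weight Ptrans w x.
Proof.
move=> w_gt0 x /andP[/forallP xF /forallP xE].
have xC j : x j \in C j by have := subsetP feasible_nodes_sub _ (xF j); rewrite inE.
by rewrite mulr_gt0 ?w_gt0 // prodr_gt0 // => j _; rewrite mulr_gt0 ?w_gt0.
Qed.

End FeasibleSubSUG.

Local Open Scope ring_scope.

Theorem lemma2 (R : realFieldType) (S : finType) (n : nat)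
  (C : 'I_n.+1 -> {set S}) (Ptrans : S -> S -> R) (w : 'I_n.+1 -> S -> R)
  (a : 'I_n.+1 -> S) :
  (forall i, a i \in C i) ->
  (forall s s', 0 <= Ptrans s s') ->
  (forall i s, s \in C i -> 0 < w i s) ->
  (forall i, \sum_(s in C i) w i s = 1) ->
  (forall i : 'I_n, 0 < Ptrans (a (widen_ord (leqnSn n) i)) (a (lift ord0 i))) ->
  forall i : 'I_n.+1,
    disclosure_risk C Ptrans w i (a i) = 1 <-> #|feasible_layer C Ptrans i| = 1%N.
Proof.
move=> aC _ w_gt0 _ a_edges i.
have a_feasible : feasible_path C Ptrans [ffun j => a j].
  apply: sug_path_feasible => [j|]; first by rewrite ffunE.
  by apply/forallP => j; rewrite !ffunE.
have a_layer : a i \in feasible_layer C Ptrans i.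
  by case/andP: a_feasible => /forallP/(_ i); rewrite ffunE inE.
apply: iff_trans (partial_sum_ratio_eq1 _ _ _) _.
- exact: feasible_path_weight_gt0 w_gt0.
- by exists [ffun j => a j].
split=> [through_a | /eqP/cards1P[s layer_i] x /andP[/forallP/(_ i) Fx _]].
- apply/eqP/cards1P; exists (a i); apply/setP => s; rewrite !inE.
  apply/idP/eqP => [/feasible_node_on_path[x /through_a/eqP xi si] | ->].
    by rewrite -si xi.
  by rewrite inE in a_layer.
- have x_layer : x i \in feasible_layer C Ptrans i by rewrite inE.
  by move: a_layer x_layer; rewrite layer_i !inE => /eqP -> /eqP ->.
Qed.
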